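(* Let $\mathbb{0}=\{x\in\omega^\omega : x(n)=0 \text{ for all but finitely many } n\}$ and consider $P=\omega^\omega\setminus\mathbb{0}$ ordered by $\le^*$. Then $\mathfrak{icp}(P,\le^* )=\mathfrak{b}$ and $\mathfrak{cp}(P,\le^* )=\mathfrak{d}$.
   Context: For $x,y\in\omega^\omega$, $x\le^* y$ means $x(n)\le y(n)$ for all but finitely many $n$. For a poset (or preorder) $(P,\le)$: $F\subseteq P$ is a comparable family if for every $p\in P$ there is $q\in F$ with $p\le q$ or $q\le p$; $F$ is an incomparable family if for every $p\in P$ there is $q\in F$ with $p\not\le q$ and $q\not\le p$. $\mathfrak{cp}(P,\le)$ is the minimal size of a comparable family and $\mathfrak{icp}(P,\le)$ is the minimal size of an incomparable family. $\mathfrak{b}$ and $\mathfrak{d}$ are the usual bounding and dominating numbers of $(\omega^\omega,\le^* )$. *)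

From mathcomp Require Import all_boot.
From mathcomp Require Import boolp classical_sets cardinality.
Set Implicit Arguments. Unset Strict Implicit. Unset Printing Implicit Defensive.
Local Open Scope classical_set_scope.
Local Open Scope card_scope.

Definition baire := nat -> nat.

Definition le_star (x y : baire) : Prop := exists N, forall n, (N <= n)%N -> (x n <= y n)%N.

Definition zero_set : set baire := [set x | exists N, forall n, (N <= n)%N -> x n = 0%N].
Definition Pset : set baire := ~` zero_set.

Definition comparable_family (F : set baire) : Prop :=
  F `<=` Pset /\
  forall p, Pset p -> exists2 q, F q & (le_star p q \/ le_star q p).
Definition incomparable_family (F : set baire) : Prop :=
  F `<=` Pset /\
  forall p, Pset p -> exists2 q, F q & (~ le_star p q /\ ~ le_star q p).

Definition unbounded_family (F : set baire) : Prop :=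
  ~ exists g : baire, forall f, F f -> le_star f g.
Definition dominating_family (F : set baire) : Prop :=
  forall g : baire, exists2 f, F f & le_star g f.

(* A is a member of Fam of minimal cardinality; its cardinality is min{|X| : X in Fam} *)
Definition is_min_card (Fam : set baire -> Prop) (A : set baire) : Prop :=
  Fam A /\ forall B, Fam B -> A #<= B.

Definition min_card_equal (Fam1 Fam2 : set baire -> Prop) : Prop :=
  exists A B, is_min_card Fam1 A /\ is_min_card Fam2 B /\ A #= B.

From mathcomp Require Import all_boot.
From mathcomp Require Import boolp classical_sets cardinality.
From mathcomp Require Import zify.
Set Implicit Arguments. Unset Strict Implicit. Unset Printing Implicit Defensive.
Local Open Scope classical_set_scope.
Local Open Scope card_scope.

(* For q in P put envelope q n := q 0 + ... + q n + (the second nonzero place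
   of q after n).  For g a function, spike g is a member of P that vanishes
   off a sparse sequence of marks 0 = r_0 < r_1 < ..., and whose value at r_k
   dominates g on the whole block [r_k, r_(k+1)).  If spike g <=* q, the
   partial sums of q dominate g blockwise; if q <=* spike g with q in P, the
   nonzero places of q are marks, so two consecutive ones after n jump past
   the block of n.  Either way g <=* envelope q.  Hence the envelopes of a
   comparable family dominate, and the spikes of an unbounded family form an
   incomparable family (a p comparable to all of them makes envelope p a
   bound).  Conversely x |-> x + 1 turns a dominating family into a comparable
   one, and an incomparable family is unbounded.  Minimal cardinalities are
   compared through a family of least cardinality, which exists by Zorn's
   lemma. *)

Lemma card_le_min_exists (I : Type) (T : pointedType) (A : I -> set T) :
  I -> exists i0, forall j, A i0 #<= A j.
Proof.
move=> i1.
pose selector (t : I -> T) := forall i, A i (t i).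
pose transversal (M : set (I -> T)) := (forall t, M t -> selector t) /\
  (forall i t s, M t -> M s -> t i = s i -> t = s).
have [M [[Msel Mdisj] Mmax]] : exists M, transversal M /\
    forall M', M `<` M' -> ~ transversal M'.
  apply: Zorn_bigcup => F Ftr Ftot; split.
    by move=> t [X FX Xt]; exact: (Ftr X FX).1.
  move=> i t s [X FX Xt] [Y FY Ys].
  have [XY|YX] := Ftot X Y FX FY.
    by apply: (Ftr Y FY).2 => //; exact: XY.
  by apply: (Ftr X FX).2 => //; exact: YX.
(* Some coordinate is exhausted by M: otherwise a fresh selector extends M. *)
have [i0 exhausted] : exists i0, forall x, A i0 x -> exists2 t, M t & t i0 = x.
  apply: contrapT => /forallNP none.
  have fresh i : exists x, A i x /\ forall t, M t -> t i <> x.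
    have /existsNP[x /not_implyP[Aix notM]] := none i.
    by exists x; split => // t Mt tix; apply: notM; exists t.
  have [t0 t0P] := choice fresh.
  apply: (Mmax (M `|` [set t0])).
    split; first by move=> t Mt; left.
    by move=> /(_ t0 (or_intror erefl)) Mt0; exact: (t0P i1).2 t0 Mt0 erefl.
  split; first by move=> t [Mt|->] i; [exact: Msel|exact: (t0P i).1].
  move=> i t s [Mt|->] [Ms|->] ets //.
  - exact: Mdisj ets.
  - by case: ((t0P i).2 t Mt ets).
  - by case: ((t0P i).2 s Ms (esym ets)).
have /choice[tr trP] : forall x, exists t, A i0 x -> M t /\ t i0 = x.
  move=> x; have [/exhausted[t Mt <-]|notA] := pselect (A i0 x).
    by exists t.
  by exists (fun=> x).
exists i0 => j; apply/pcard_leP/injfunPex; exists (fun x => tr x j).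
  by move=> x /trP[Mx _]; exact: Msel.
move=> x y /set_mem/trP[Mx trx] /set_mem/trP[My try] exy.
by rewrite -trx -try (Mdisj j _ _ Mx My exy).
Qed.

Lemma is_min_card_exists (Fam : set baire -> Prop) :
  (exists A, Fam A) -> exists A, is_min_card Fam A.
Proof.
move=> [A0 FA0].
have [[A FA] Amin] := @card_le_min_exists {A | Fam A} baire sval (exist _ A0 FA0).
by exists A; split => // B FB; exact: (Amin (exist _ B FB)).
Qed.

Lemma min_card_equal_transfer (Fam1 Fam2 : set baire -> Prop) :
  (forall A, Fam1 A -> exists2 B, Fam2 B & B #<= A) ->
  (forall B, Fam2 B -> exists2 A, Fam1 A & A #<= B) ->
  (exists A, Fam1 A) -> min_card_equal Fam1 Fam2.
Proof.
move=> to2 to1 /is_min_card_exists[A [FA Amin]].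
have [B FB BA] := to2 A FA; have [A2 FA2 A2B] := to1 B FB.
exists A, B; split=> //; split.
  split=> // B' FB'; have [A' FA' A'B'] := to1 B' FB'.
  exact: card_le_trans BA (card_le_trans (Amin _ FA') A'B').
exact: Cantor_Bernstein (card_le_trans (Amin _ FA2) A2B) BA.
Qed.

Definition majorant (f : baire) (m : nat) : nat := \sum_(i < m.+1) f i + m.+1.

Lemma leq_partial_sum (f : baire) i m : i <= m -> f i <= \sum_(j < m.+1) f j.
Proof.
by move=> im; rewrite (bigD1 (Ordinal (im : i < m.+1))) //= leq_addr.
Qed.

Lemma leq_majorant (f : baire) i m : i <= m -> f i <= majorant f m.
Proof. by move=> /(leq_partial_sum f) im; exact: leq_trans im (leq_addr _ _). Qed.

Lemma ltn_majorant (f : baire) m : m < majorant f m.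
Proof. exact: leq_addl. Qed.

Fixpoint mark (f : baire) (k : nat) : nat :=
  if k is k'.+1 then (majorant f (mark f k')).+1 else 0.

Lemma mark_mono (f : baire) : {mono mark f : j k / j <= k}.
Proof.
apply: leq_mono; apply: homo_ltn => [y x z|k]; first exact: ltn_trans.
exact: ltnW (ltn_majorant f (mark f k)).
Qed.

Lemma mark_ltn_mono (f : baire) : {mono mark f : j k / j < k}.
Proof. exact: leqW_mono (mark_mono f). Qed.

Lemma leq_mark (f : baire) k : k <= mark f k.
Proof.
elim: k => // k IH; apply: leq_ltn_trans IH _.
by rewrite mark_ltn_mono.
Qed.

Lemma mark_block (f : baire) n : exists k, mark f k <= n < mark f k.+1.
Proof.
have ex : exists k, n < mark f k by exists n.+1; exact: leq_mark.
case: (ex_minnP ex) => -[|k] nk kmin; first by [].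
exists k; rewrite nk andbT leqNgt; apply/negP => /kmin; lia.
Qed.

Definition spike (f : baire) (m : nat) : nat :=
  if pselect (exists k, mark f k = m) then majorant f (majorant f m).+1 else 0.

Lemma spike_mark (f : baire) k : spike f (mark f k) = majorant f (mark f k.+1).
Proof. by rewrite /spike; case: pselect => // -[]; exists k. Qed.

Lemma spike_neq0 (f : baire) m : spike f m <> 0 -> exists k, mark f k = m.
Proof. by rewrite /spike; case: pselect. Qed.

Lemma spike_Pset (f : baire) : Pset (spike f).
Proof.
move=> [N spike0]; have := spike0 (mark f N) (leq_mark f N).
by rewrite spike_mark; have := ltn_majorant f (mark f N.+1); lia.
Qed.

Lemma Pset_nonzero_after (q : baire) n : Pset q -> exists m, n < m /\ q m <> 0.
Proof.
move=> Pq; apply: contrapT => none; apply: Pq; exists n.+1 => m nm.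
by apply: contrapT => qm; apply: none; exists m.
Qed.

Definition next_nonzero (q : baire) (n : nat) : nat :=
  xget 0 [set m | n < m /\ q m <> 0].

Lemma next_nonzeroP (q : baire) n : Pset q ->
  n < next_nonzero q n /\ q (next_nonzero q n) <> 0.
Proof. by move=> /(Pset_nonzero_after n); exact: xgetPex. Qed.

Definition envelope (q : baire) (n : nat) : nat :=
  \sum_(i < n.+1) q i + next_nonzero q (next_nonzero q n).

Lemma spike_le_envelope (g q : baire) :
  le_star (spike g) q -> le_star g (envelope q).
Proof.
move=> [N spike_le]; exists (mark g N) => n Nn.
have [k /andP[kn nk]] := mark_block g n.
have Nk : N <= k by rewrite -ltnS -(mark_ltn_mono g); exact: leq_ltn_trans nk.
have := spike_le _ (leq_trans Nk (leq_mark g k)); rewrite spike_mark => gq.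
have := leq_partial_sum q kn; have := leq_majorant g (ltnW nk).
rewrite /envelope; lia.
Qed.

Lemma le_spike_envelope (g q : baire) :
  Pset q -> le_star q (spike g) -> le_star g (envelope q).
Proof.
move=> Pq [N le_spike]; exists N => n Nn.
set a := next_nonzero q n; set b := next_nonzero q a.
have [na qa] : n < a /\ q a <> 0 := next_nonzeroP n Pq.
have [ab qb] : a < b /\ q b <> 0 := next_nonzeroP a Pq.
have at_mark m : N <= m -> q m <> 0 -> exists k, mark g k = m.
  by move=> Nm qm; apply: spike_neq0; have := le_spike m Nm; lia.
have [j ja] := at_mark a ltac:(lia) qa; have [j' jb] := at_mark b ltac:(lia) qb.
have jj' : j < j' by rewrite -(mark_ltn_mono g) ja jb.
have : mark g j.+1 <= b by rewrite -jb mark_mono.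
have := leq_majorant g (ltnW na); rewrite -ja /envelope -/a -/b /=; lia.
Qed.

Lemma unbounded_incomparable_spikes U :
  unbounded_family U -> incomparable_family (spike @` U).
Proof.
move=> Uunb; split; first by move=> _ [u _ <-]; exact: spike_Pset.
move=> p Pp; have [u Uu not_le] : exists2 u, U u & ~ le_star u (envelope p).
  apply: contrapT => none; apply: Uunb; exists (envelope p) => u Uu.
  by apply: contrapT => not_le; apply: none; exists u.
exists (spike u); first by exists u.
split => [/(le_spike_envelope Pp)|/spike_le_envelope]; exact: not_le.
Qed.

Lemma comparable_dominating_envelopes F :
  comparable_family F -> dominating_family (envelope @` F).
Proof.
move=> [FP Fcomp] g; have [q Fq [le|le]] := Fcomp _ (@spike_Pset g).
- by exists (envelope q); [exists q|exact: spike_le_envelope].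
- by exists (envelope q); [exists q|exact: le_spike_envelope (FP q Fq) le].
Qed.

Definition succf (f : baire) : baire := fun n => (f n).+1.

Lemma succf_Pset (f : baire) : Pset (succf f).
Proof. by move=> [N] /(_ N (leqnn N)). Qed.

Lemma incomparable_unbounded F : incomparable_family F -> unbounded_family F.
Proof.
move=> [FP Fincomp] [g Fle]; have [q Fq [_ []]] := Fincomp _ (@succf_Pset g).
have [N le] := Fle q Fq; exists N => n /le; rewrite /succf; lia.
Qed.

Lemma dominating_comparable_succf D :
  dominating_family D -> comparable_family (succf @` D).
Proof.
move=> Ddom; split; first by move=> _ [d _ <-]; exact: succf_Pset.
move=> p _; have [d Dd [N le]] := Ddom p.
exists (succf d); first by exists d.
by left; exists N => n /le; rewrite /succf; lia.
Qed.

Lemma unbounded_setT : unbounded_family setT.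
Proof. by move=> [g /(_ (succf g) I)[N /(_ N (leqnn N))]]; rewrite /succf ltnn. Qed.

Lemma dominating_setT : dominating_family setT.
Proof. by move=> g; exists g => //; exists 0. Qed.

Theorem mainTheorem1 :
  min_card_equal incomparable_family unbounded_family /\
  min_card_equal comparable_family dominating_family.
Proof.
split; apply: min_card_equal_transfer.
- by move=> A Ainc; exists A; [exact: incomparable_unbounded|exact: card_lexx].
- by move=> B Bunb; exists (spike @` B);
    [exact: unbounded_incomparable_spikes|exact: card_image_le].
- by exists (spike @` setT); exact: unbounded_incomparable_spikes unbounded_setT.
- by move=> A Acomp; exists (envelope @` A);
    [exact: comparable_dominating_envelopes|exact: card_image_le].
- by move=> B Bdom; exists (succf @` B);
    [exact: dominating_comparable_succf|exact: card_image_le].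
- by exists (succf @` setT); exact: dominating_comparable_succf dominating_setT.
Qed.
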